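(* Let $u\geq 1$, $a=(-u,-1)$, $b=(u,1)$. Consider the following eight open rectangles (''grey cells''): $H_1=(-\infty,-u)\times(0,1)$, $H_2=(-u,0)\times(1,\infty)$, $H_3=(0,u)\times(-\infty,-1)$, $H_4=(u,\infty)\times(-1,0)$, $S_1=(-\infty,-u)\times(1,\infty)$, $S_2=(-u,0)\times(0,1)$, $S_3=(0,u)\times(-1,0)$, $S_4=(u,\infty)\times(-\infty,-1)$. If $C=I\times J$ is one of these cells and $x\in I$, then for each $p\neq 0$ close enough to zero there exists $y_p\in J$ such that $(x,y_p)\in B_p(a,b)$. Moreover, the remaining eight open rectangles of the form $I\times J$ with $I\in\{(-\infty,-u),(-u,0),(0,u),(u,\infty)\}$ and $J\in\{(-\infty,-1),(-1,0),(0,1),(1,\infty)\}$ (''white cells'') contain no point of $B_p(a,b)$ for any $p\neq 0$.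
   Context: For $p\neq 0$ and $(x,y)\in\mathbb{R}^2$ let $L_p((x,y))=(|x|^p+|y|^p)^{1/p}$; for $p<0$ this is extended by setting $L_p((x,y))=0$ whenever $x=0$ or $y=0$. The bisector is $B_p(a,b)=\{q\in\mathbb{R}^2: L_p(a-q)=L_p(b-q)\}$. *)

From Stdlib Require Import Reals Lra.
Open Scope R_scope.

(* real power with the convention 0^e = 0 (used only for e <> 0) *)
Definition rpow (t e : R) : R := if Req_EM_T t 0 then 0 else Rpower t e.

Definition Lp (p : R) (q : R * R) : R :=
  let (x, y) := q in
  if Rlt_dec p 0 then
    (if Req_EM_T x 0 then 0 else if Req_EM_T y 0 then 0
     else rpow (Rpower (Rabs x) p + Rpower (Rabs y) p) (/ p))
  else rpow (rpow (Rabs x) p + rpow (Rabs y) p) (/ p).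

Definition vsub (a q : R * R) : R * R := (fst a - fst q, snd a - snd q).

Definition in_bisector (p : R) (a b q : R * R) : Prop :=
  Lp p (vsub a q) = Lp p (vsub b q).

Definition Xint (u : R) (i : nat) (x : R) : Prop :=
  match i with
  | 0%nat => x < - u
  | 1%nat => - u < x < 0
  | 2%nat => 0 < x < u
  | _ => u < x
  end.

Definition Yint (j : nat) (y : R) : Prop :=
  match j with
  | 0%nat => y < -1
  | 1%nat => -1 < y < 0
  | 2%nat => 0 < y < 1
  | _ => 1 < y
  end.

(* Grey cells: H1=(0,2), H2=(1,3), H3=(2,0), H4=(3,1),
               S1=(0,3), S2=(1,2), S3=(2,1), S4=(3,0). *)
Definition grey (i j : nat) : Prop :=
  (i = 0 /\ j = 2 \/ i = 1 /\ j = 3 \/ i = 2 /\ j = 0 \/ i = 3 /\ j = 1 \/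
   i = 0 /\ j = 3 \/ i = 1 /\ j = 2 \/ i = 2 /\ j = 1 \/ i = 3 /\ j = 0)%nat.

(** Write [gap p c t := |c + t|^p - |c - t|^p].  Off the coordinate lines
    [x = ±u], [y = ±1], the point [(x, y)] lies on the bisector exactly when
    [gap p 1 y = gap p u (-x)].  For [t <> 0], [p * gap p c t] has the sign of
    [t], i.e. the nearer of [a, b] in each coordinate is decided by the side
    of the point.  Hence white cells, where [x] and [y] have the same sign, miss the
    bisector.  In a grey cell the level [k = gap p u (-x)] has the sign of
    [p], and [|k| < 1] once [p] is small, since [gap 0 c t = 0].  The
    intermediate value theorem then gives a root of [gap p 1 y = k] in
    [(0, 1)] and one in [(1, oo)]: on either side of [y = 1] the function
    [gap p 1] passes a point with [p * (gap p 1 y - k) > 0], near [y = 1], and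
    one with the opposite sign, at [y = 0] or as [y -> oo]. *)

From Stdlib Require Import Reals Lra Lia Ranalysis5.
Open Scope R_scope.

Lemma Rpower_pos t e : 0 < Rpower t e.
Proof. apply exp_pos. Qed.

Lemma Rpower_base_1 e : Rpower 1 e = 1.
Proof. unfold Rpower. rewrite ln_1, Rmult_0_r. apply exp_0. Qed.

Lemma Rpower_exponent_0 t : Rpower t 0 = 1.
Proof. unfold Rpower. rewrite Rmult_0_l. apply exp_0. Qed.

Lemma Rpower_inv_exponent t p : p <> 0 -> 0 < t -> Rpower (Rpower t (/ p)) p = t.
Proof. intros hp ht. rewrite Rpower_mult, Rinv_l by exact hp. now apply Rpower_1. Qed.

Lemma Rpower_lt_sign a b p : 0 < a < b -> p <> 0 ->
  0 < p * (Rpower b p - Rpower a p).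
Proof.
  intros [ha hab] hp. unfold Rpower.
  assert (hln : ln a < ln b) by (apply ln_increasing; lra).
  destruct (Rlt_dec p 0) as [hneg | hpos].
  - assert (exp (p * ln b) < exp (p * ln a)) by (apply exp_increasing; nra). nra.
  - assert (exp (p * ln a) < exp (p * ln b)) by (apply exp_increasing; nra). nra.
Qed.

Lemma Rpower_base_inj s t p : p <> 0 -> 0 < s -> 0 < t ->
  Rpower s p = Rpower t p -> s = t.
Proof.
  intros hp hs ht heq.
  destruct (Rtotal_order s t) as [hst | [-> | hts]]; [| reflexivity |].
  - pose proof (Rpower_lt_sign s t p (conj hs hst) hp) as hlt. rewrite heq in hlt. lra.
  - pose proof (Rpower_lt_sign t s p (conj ht hts) hp) as hlt. rewrite heq in hlt. lra.
Qed.

Lemma Rpower_root_lt_1 s p : 0 < s -> 0 < p * (1 - s) -> Rpower s (/ p) < 1.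
Proof.
  intros hs hps. unfold Rpower. rewrite <- exp_0. apply exp_increasing.
  destruct (Rlt_dec p 0) as [hneg | hpos].
  - assert (0 < ln s) by (rewrite <- ln_1; apply ln_increasing; nra).
    assert (/ p < 0) by (apply Rinv_lt_0_compat; lra). nra.
  - assert (ln s < 0) by (rewrite <- ln_1; apply ln_increasing; nra).
    assert (0 < / p) by (apply Rinv_0_lt_compat; nra). nra.
Qed.

(** [(2 + v)^p = v^p q^p <= v^p q] for [q = (2 + v)/v >= 1], since [p <= 1]. *)
Lemma Rpower_shift_le p v : 0 < p < 1 -> 0 < v ->
  Rpower (2 + v) p <= Rpower v p + 2 * Rpower v (p - 1).
Proof.
  intros hp hv.
  assert (hq : 1 <= (2 + v) / v).
  { unfold Rdiv. rewrite Rmult_plus_distr_r, Rinv_r by lra.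
    assert (0 < 2 * / v) by (apply Rmult_lt_0_compat; [lra | now apply Rinv_0_lt_compat]).
    lra. }
  replace (2 + v) with (v * ((2 + v) / v)) by (field; lra).
  rewrite <- Rpower_mult_distr by lra.
  assert (Rpower ((2 + v) / v) p <= (2 + v) / v).
  { rewrite <- (Rpower_1 ((2 + v) / v)) at 2 by lra. apply Rle_Rpower; lra. }
  unfold Rminus. rewrite Rpower_plus, Rpower_Ropp, Rpower_1 by lra.
  pose proof (Rpower_pos v p).
  replace (Rpower v p + 2 * (Rpower v p * / v)) with (Rpower v p * ((2 + v) / v))
    by (field; lra).
  apply Rmult_le_compat_l; lra.
Qed.

Lemma continuity_pt_Rpower_abs p g z : continuity_pt g z -> g z <> 0 ->
  continuity_pt (fun y => Rpower (Rabs (g y)) p) z.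
Proof.
  intros hg hz.
  change (continuity_pt (comp (fun t => Rpower t p) (comp Rabs g)) z).
  apply continuity_pt_comp.
  - apply continuity_pt_comp; [exact hg | apply Rcontinuity_abs].
  - apply derivable_continuous_pt. eexists.
    apply derivable_pt_lim_power. now apply Rabs_pos_lt.
Qed.

Lemma IVT_ordered F r s : r < s -> (forall z, r <= z <= s -> continuity_pt F z) ->
  F r * F s < 0 -> exists z, r < z < s /\ F z = 0.
Proof.
  intros hrs hF hsign.
  assert (hroot : exists z, r <= z <= s /\ F z = 0).
  { destruct (Rtotal_order (F r) 0) as [hr | [hr | hr]].
    - destruct (IVT_interv F r s hF hrs hr ltac:(nra)) as [z hz]. now exists z.
    - rewrite hr in hsign. lra.
    - assert (hF' : forall a, r <= a <= s -> continuity_pt (fun y => - F y) a)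
        by (intros a ha; apply continuity_pt_opp; now apply hF).
      destruct (IVT_interv (fun y => - F y) r s hF' hrs ltac:(cbv beta; lra)
                  ltac:(cbv beta; nra)) as [z [hz hFz]].
      exists z. split; [exact hz | lra]. }
  destruct hroot as [z [hz hFz]].
  assert (z <> r) by (intros ->; rewrite hFz in hsign; lra).
  assert (z <> s) by (intros ->; rewrite hFz in hsign; lra).
  exists z. split; [lra | exact hFz].
Qed.

Lemma IVT_between F r s :
  (forall z, Rmin r s <= z <= Rmax r s -> continuity_pt F z) ->
  F r * F s < 0 -> exists z, Rmin r s < z < Rmax r s /\ F z = 0.
Proof.
  intros hF hsign.
  destruct (Rtotal_order r s) as [hrs | [<- | hsr]].
  - rewrite Rmin_left, Rmax_right in * by lra. now apply IVT_ordered.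
  - nra.
  - rewrite Rmin_right, Rmax_left in * by lra.
    apply IVT_ordered; [exact hsr | exact hF | lra].
Qed.

Definition gap (p c t : R) : R := Rpower (Rabs (c + t)) p - Rpower (Rabs (c - t)) p.

Lemma gap_opp p c t : gap p c (- t) = - gap p c t.
Proof.
  unfold gap. replace (c + - t) with (c - t) by ring. replace (c - - t) with (c + t) by ring.
  ring.
Qed.

Lemma gap_sign p c t : 0 < c -> p <> 0 -> t <> 0 -> t <> c -> t <> - c ->
  0 < t * (p * gap p c t).
Proof.
  intros hc hp ht htc htc'.
  assert (hpos : forall s, 0 < s -> s <> c -> 0 < p * gap p c s).
  { intros s hs hsc. unfold gap. rewrite (Rabs_right (c + s)) by lra.
    apply Rpower_lt_sign; [| exact hp]. split.
    - apply Rabs_pos_lt. lra.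
    - unfold Rabs. destruct Rcase_abs; lra. }
  destruct (Rtotal_order t 0) as [hneg | [-> | hgt]].
  - replace t with (- - t) by ring. rewrite gap_opp.
    assert (0 < p * gap p c (- t)) by (apply hpos; lra). nra.
  - contradiction.
  - assert (0 < p * gap p c t) by (apply hpos; lra). nra.
Qed.

Lemma continuity_pt_gap_sub p c k z : z <> c -> z <> - c ->
  continuity_pt (fun y => gap p c y - k) z.
Proof.
  intros hzc hzc'. unfold gap.
  repeat apply continuity_pt_minus; try apply continuity_pt_Rpower_abs; try lra; reg.
Qed.

Lemma gap_small c t : exists d, 0 < d /\ forall p, Rabs p < d -> Rabs (gap p c t) < 1.
Proof.
  assert (hcont : continuity_pt (fun p => gap p c t) 0) by (unfold gap, Rpower; reg).
  destruct (hcont 1 Rlt_0_1) as [d [hd hnear]].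
  exists d. split; [exact hd |]. intros p hp.
  assert (hgap0 : gap 0 c t = 0) by (unfold gap; rewrite !Rpower_exponent_0; ring).
  destruct (Req_dec p 0) as [-> | hp0]; [rewrite hgap0, Rabs_R0; lra |].
  specialize (hnear p). simpl in hnear. unfold R_dist in hnear.
  rewrite hgap0, Rminus_0_r, Rminus_0_r in hnear. apply hnear.
  split; [split; [exact I | auto] | exact hp].
Qed.

(** [w] is chosen with [w^p = 1 - k], so that [gap p 1 (1 -+ w) - k = (2 -+ w)^p - 1]. *)
Lemma gap_near_one p k : 0 < p * k -> k < 1 -> exists w, 0 < w < 1 /\
  0 < p * (gap p 1 (1 - w) - k) /\ 0 < p * (gap p 1 (1 + w) - k).
Proof.
  intros hpk hk.
  assert (hp : p <> 0) by (intros ->; lra).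
  set (w := Rpower (1 - k) (/ p)).
  assert (hw0 : 0 < w) by apply Rpower_pos.
  assert (hw1 : w < 1).
  { apply Rpower_root_lt_1; [lra |]. now replace (1 - (1 - k)) with k by ring. }
  assert (hwp : Rpower w p = 1 - k) by (apply Rpower_inv_exponent; lra).
  assert (hsign : forall t, 1 < t -> 0 < p * (Rpower t p - 1)).
  { intros t ht. rewrite <- (Rpower_base_1 p). apply Rpower_lt_sign; lra. }
  exists w. split; [lra | split].
  - unfold gap. rewrite (Rabs_right (1 + (1 - w))), (Rabs_right (1 - (1 - w))) by lra.
    replace (1 - (1 - w)) with w by ring. rewrite hwp.
    replace (Rpower (1 + (1 - w)) p - (1 - k) - k) with (Rpower (1 + (1 - w)) p - 1) by ring.
    apply hsign. lra.
  - unfold gap. rewrite (Rabs_right (1 + (1 + w))), (Rabs_left1 (1 - (1 + w))) by lra.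
    replace (- (1 - (1 + w))) with w by ring. rewrite hwp.
    replace (Rpower (1 + (1 + w)) p - (1 - k) - k) with (Rpower (1 + (1 + w)) p - 1) by ring.
    apply hsign. lra.
Qed.

Lemma gap_root_in_unit_interval p k : 0 < p * k -> k < 1 ->
  exists y, 0 < y < 1 /\ gap p 1 y = k.
Proof.
  intros hpk hk.
  destruct (gap_near_one p k hpk hk) as [w [hw [hnear _]]].
  assert (hzero : gap p 1 0 - k = - k) by (unfold gap; rewrite Rplus_0_r, Rminus_0_r; ring).
  destruct (IVT_ordered (fun y => gap p 1 y - k) 0 (1 - w)) as [z [hz hroot]].
  - lra.
  - intros z hz. apply continuity_pt_gap_sub; lra.
  - cbv beta. rewrite hzero. nra.
  - exists z. split; [lra | cbv beta in hroot; lra].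
Qed.

Lemma gap_one_shift p v : 0 < v -> gap p 1 (1 + v) = Rpower (2 + v) p - Rpower v p.
Proof.
  intro hv. unfold gap. rewrite Rabs_right, Rabs_left1 by lra.
  now replace (1 + (1 + v)) with (2 + v) by ring; replace (- (1 - (1 + v))) with v by ring.
Qed.

(** For [p < 0] take [v^p = -k]; for [0 < p < 1] take [v^(p-1) = k/4] and use
    [Rpower_shift_le]. *)
Lemma gap_far_from_one p k : p < 1 -> 0 < p * k ->
  exists v, 0 < v /\ p * (gap p 1 (1 + v) - k) < 0.
Proof.
  intros hp1 hpk.
  destruct (Rlt_dec p 0) as [hneg | hpos].
  - assert (hk : k < 0) by nra.
    set (v := Rpower (- k) (/ p)).
    assert (hv : 0 < v) by apply Rpower_pos.
    assert (hvp : Rpower v p = - k) by (apply Rpower_inv_exponent; lra).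
    exists v. split; [exact hv |]. rewrite gap_one_shift, hvp by exact hv.
    pose proof (Rpower_pos (2 + v) p). nra.
  - assert (hp : 0 < p) by (destruct (Req_dec p 0) as [-> |]; lra).
    assert (hk : 0 < k) by nra.
    set (v := Rpower (k / 4) (/ (p - 1))).
    assert (hv : 0 < v) by apply Rpower_pos.
    assert (hvp : Rpower v (p - 1) = k / 4) by (apply Rpower_inv_exponent; lra).
    exists v. split; [exact hv |]. rewrite gap_one_shift by exact hv.
    pose proof (Rpower_shift_le p v ltac:(lra) hv). nra.
Qed.

Lemma gap_root_beyond_one p k : p < 1 -> 0 < p * k -> k < 1 ->
  exists y, 1 < y /\ gap p 1 y = k.
Proof.
  intros hp1 hpk hk.
  destruct (gap_near_one p k hpk hk) as [w [hw [_ hnear]]].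
  destruct (gap_far_from_one p k hp1 hpk) as [v [hv hfar]].
  assert (hmin : 1 < Rmin (1 + w) (1 + v)) by (apply Rmin_glb_lt; lra).
  destruct (IVT_between (fun y => gap p 1 y - k) (1 + w) (1 + v)) as [z [hz hroot]].
  - intros z hz. apply continuity_pt_gap_sub; lra.
  - cbv beta. nra.
  - exists z. split; [lra | cbv beta in hroot; lra].
Qed.

Lemma gap_levels_near_zero c t : 0 < c -> 0 < t -> t <> c ->
  exists d, 0 < d /\ forall p, p <> 0 -> Rabs p < d ->
    (exists y, 0 < y < 1 /\ gap p 1 y = gap p c t) /\
    (exists y, 1 < y /\ gap p 1 y = gap p c t).
Proof.
  intros hc ht htc.
  destruct (gap_small c t) as [d [hd hsmall]].
  exists (Rmin d 1). split; [apply Rmin_glb_lt; lra |].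
  intros p hp hpd.
  assert (hpd' : Rabs p < d) by (pose proof (Rmin_l d 1); lra).
  assert (hp1 : p < 1) by (pose proof (Rmin_r d 1); pose proof (Rle_abs p); lra).
  assert (hk : gap p c t < 1) by (pose proof (Rle_abs (gap p c t)); pose proof (hsmall p hpd'); lra).
  assert (hpk : 0 < p * gap p c t).
  { pose proof (gap_sign p c t hc hp ltac:(lra) htc ltac:(lra)). nra. }
  split.
  - now apply gap_root_in_unit_interval.
  - now apply gap_root_beyond_one.
Qed.

Lemma rpow_pos_base t e : 0 < t -> rpow t e = Rpower t e.
Proof. intro ht. unfold rpow. destruct (Req_EM_T t 0); [lra | reflexivity]. Qed.

Lemma Lp_nonzero p x y : x <> 0 -> y <> 0 ->
  Lp p (x, y) = Rpower (Rpower (Rabs x) p + Rpower (Rabs y) p) (/ p).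
Proof.
  intros hx hy.
  assert (hx' : 0 < Rabs x) by now apply Rabs_pos_lt.
  assert (hy' : 0 < Rabs y) by now apply Rabs_pos_lt.
  pose proof (Rpower_pos (Rabs x) p). pose proof (Rpower_pos (Rabs y) p).
  unfold Lp. destruct (Rlt_dec p 0).
  - destruct (Req_EM_T x 0); [contradiction |].
    destruct (Req_EM_T y 0); [contradiction |].
    apply rpow_pos_base. lra.
  - rewrite (rpow_pos_base (Rabs x)), (rpow_pos_base (Rabs y)) by assumption.
    apply rpow_pos_base. lra.
Qed.

Lemma Lp_eq_iff p x1 y1 x2 y2 : p <> 0 -> x1 <> 0 -> y1 <> 0 -> x2 <> 0 -> y2 <> 0 ->
  (Lp p (x1, y1) = Lp p (x2, y2) <->
   Rpower (Rabs x1) p + Rpower (Rabs y1) p = Rpower (Rabs x2) p + Rpower (Rabs y2) p).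
Proof.
  intros hp hx1 hy1 hx2 hy2.
  rewrite !Lp_nonzero by assumption.
  pose proof (Rpower_pos (Rabs x1) p). pose proof (Rpower_pos (Rabs y1) p).
  pose proof (Rpower_pos (Rabs x2) p). pose proof (Rpower_pos (Rabs y2) p).
  split; intro heq; [| now rewrite heq].
  apply Rpower_base_inj with (/ p); [now apply Rinv_neq_0_compat | lra | lra | exact heq].
Qed.

Lemma in_bisector_iff_gap u p x y : p <> 0 -> x <> u -> x <> - u -> y <> 1 -> y <> - 1 ->
  (in_bisector p (- u, -1) (u, 1) (x, y) <-> gap p 1 y = gap p u (- x)).
Proof.
  intros hp hxu hxu' hy hy'.
  unfold in_bisector, vsub, gap; cbn [fst snd].
  rewrite Lp_eq_iff by lra.
  replace (- u - x) with (- (u - - x)) by ring. replace (-1 - y) with (- (1 + y)) by ring.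
  replace (u - x) with (u + - x) by ring. rewrite !Rabs_Ropp.
  split; intro; lra.
Qed.

Lemma bisector_white u p x y : 0 < u -> p <> 0 -> x <> u -> x <> - u -> y <> 1 -> y <> - 1 ->
  0 < x * y -> ~ in_bisector p (- u, -1) (u, 1) (x, y).
Proof.
  intros hu hp hxu hxu' hy hy' hxy.
  rewrite in_bisector_iff_gap by assumption. intro heq.
  assert (hx : x <> 0) by (intros ->; lra). assert (hy0 : y <> 0) by (intros ->; lra).
  pose proof (gap_sign p 1 y ltac:(lra) hp hy0 hy hy').
  pose proof (gap_sign p u (- x) hu hp ltac:(lra) ltac:(lra) ltac:(lra)).
  rewrite heq in *. nra.
Qed.

Lemma bisector_grey_left u x j : 0 < u -> x < 0 -> x <> - u -> (j = 2 \/ j = 3)%nat ->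
  exists d, 0 < d /\ forall p, p <> 0 -> Rabs p < d ->
    exists y, Yint j y /\ in_bisector p (- u, -1) (u, 1) (x, y).
Proof.
  intros hu hx hxu hj.
  destruct (gap_levels_near_zero u (- x) hu ltac:(lra) ltac:(lra)) as [d [hd hroots]].
  exists d. split; [exact hd |]. intros p hp hpd.
  destruct (hroots p hp hpd) as [[y1 [hy1 heq1]] [y2 [hy2 heq2]]].
  destruct hj as [-> | ->]; [exists y1 | exists y2];
    (split; [simpl; lra | apply in_bisector_iff_gap; auto; lra]).
Qed.

Lemma bisector_grey_right u x j : 0 < u -> 0 < x -> x <> u -> (j = 0 \/ j = 1)%nat ->
  exists d, 0 < d /\ forall p, p <> 0 -> Rabs p < d ->
    exists y, Yint j y /\ in_bisector p (- u, -1) (u, 1) (x, y).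
Proof.
  intros hu hx hxu hj.
  destruct (gap_levels_near_zero u x hu hx hxu) as [d [hd hroots]].
  exists d. split; [exact hd |]. intros p hp hpd.
  destruct (hroots p hp hpd) as [[y1 [hy1 heq1]] [y2 [hy2 heq2]]].
  destruct hj as [-> | ->]; [exists (- y2) | exists (- y1)];
    (split; [simpl; lra | apply in_bisector_iff_gap; try lra]);
    rewrite !gap_opp; lra.
Qed.

Theorem lemma1 (u : R) (hu : 1 <= u) :
  let a := (- u, -1) in
  let b := (u, 1) in
  (forall (i j : nat), grey i j ->
     forall x, Xint u i x ->
       exists d, 0 < d /\
         forall p, p <> 0 -> Rabs p < d ->
           exists y, Yint j y /\ in_bisector p a b (x, y)) /\
  (forall (i j : nat), (i < 4)%nat -> (j < 4)%nat -> ~ grey i j ->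
     forall p x y, p <> 0 -> Xint u i x -> Yint j y ->
       ~ in_bisector p a b (x, y)).
Proof.
  intros a b. subst a b. split.
  - intros i j hg x hx.
    destruct hg as [[-> ->]|[[-> ->]|[[-> ->]|[[-> ->]|[[-> ->]|[[-> ->]|[[-> ->]|[-> ->]]]]]]]];
      simpl in hx;
      first [ apply bisector_grey_left; [lra | lra | lra | lia]
            | apply bisector_grey_right; [lra | lra | lra | lia] ].
  - intros i j hi hj hwhite p x y hp hx hy.
    destruct i as [|[|[|[|i]]]]; try lia; destruct j as [|[|[|[|j]]]]; try lia;
      try (exfalso; apply hwhite; unfold grey; lia);
      simpl in hx, hy; apply bisector_white; nra.
Qed.
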